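(* There is at most one limit on $BM(\infty)$: if $L'$ and $L''$ are mappings $BM(\infty)\to\mathbb{R}$, each satisfying (1) if $f(x)=c$ for every $x$ then the value at $f$ is $c$, and (2) whenever $f,g\in BM(\infty)$ and the value at $f$ is strictly less than the value at $g$, there exists $a$ with $f(x)<g(x)$ for all $x>a$, then $L'(f)=L''(f)$ for every $f\in BM(\infty)$.
   Context: All functions are real-valued functions of a real variable. $BM(\infty)$ is the class of functions $f$ for which there exists $x_0$ such that $f$ is defined, bounded and monotone on the interval $(x_0,\infty)$. *)

From Stdlib Require Import Reals.
Open Scope R_scope.

(* A real-valued function of a real variable, possibly partial:
   f x = None means f is undefined at x. *)
Definition pfun := R -> option R.

Definition defined_on_ray (f : pfun) (x0 : R) : Prop :=
  forall x, x0 < x -> exists y, f x = Some y.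

Definition bounded_on_ray (f : pfun) (x0 : R) : Prop :=
  exists M, forall x y, x0 < x -> f x = Some y -> Rabs y <= M.

Definition nondecreasing_on_ray (f : pfun) (x0 : R) : Prop :=
  forall x1 x2 y1 y2, x0 < x1 -> x1 <= x2 -> f x1 = Some y1 -> f x2 = Some y2 -> y1 <= y2.

Definition nonincreasing_on_ray (f : pfun) (x0 : R) : Prop :=
  forall x1 x2 y1 y2, x0 < x1 -> x1 <= x2 -> f x1 = Some y1 -> f x2 = Some y2 -> y2 <= y1.

Definition BM (f : pfun) : Prop :=
  exists x0, defined_on_ray f x0 /\ bounded_on_ray f x0 /\
    (nondecreasing_on_ray f x0 \/ nonincreasing_on_ray f x0).

Definition const_fun (c : R) : pfun := fun _ => Some c.

Definition eventually_lt (f g : pfun) : Prop :=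
  exists a, forall x, a < x -> exists y z, f x = Some y /\ g x = Some z /\ y < z.

(* A "limit" on BM(oo): a mapping BM(oo) -> R (given as a map on all
   partial functions, only its values on BM(oo) matter) satisfying (1),(2). *)
Definition is_limit_on_BM (L : pfun -> R) : Prop :=
  (forall c, L (const_fun c) = c) /\
  (forall f g, BM f -> BM g -> L f < L g -> eventually_lt f g).

(* If L1 f < L2 f, compare f with the constant c halfway between: property (2) of L1
   makes f eventually below c, and property (2) of L2 makes f eventually above c. *)
From Stdlib Require Import Reals Lra.
Open Scope R_scope.

Lemma BM_const (c : R) : BM (const_fun c).
Proof.
  exists 0; split; [|split].
  - intros x _; exists c; reflexivity.
  - exists (Rabs c); intros x y _ [= <-]; apply Rle_refl.
  - left; intros x1 x2 y1 y2 _ _ [= <-] [= <-]; apply Rle_refl.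
Qed.

Lemma eventually_lt_asym (f g : pfun) :
  eventually_lt f g -> ~ eventually_lt g f.
Proof.
  intros [a Ha] [b Hb].
  set (x := Rmax a b + 1).
  destruct (Ha x) as [y [z [Hfy [Hgz Hyz]]]].
  { pose proof (Rmax_l a b); unfold x; lra. }
  destruct (Hb x) as [z' [y' [Hgz' [Hfy' Hzy]]]].
  { pose proof (Rmax_r a b); unfold x; lra. }
  rewrite Hfy in Hfy'; rewrite Hgz in Hgz'.
  injection Hfy' as <-; injection Hgz' as <-; lra.
Qed.

Lemma limit_on_BM_not_lt (L1 L2 : pfun -> R) :
  is_limit_on_BM L1 -> is_limit_on_BM L2 ->
  forall f, BM f -> ~ L1 f < L2 f.
Proof.
  intros [const1 mono1] [const2 mono2] f Hf Hlt.
  set (c := (L1 f + L2 f) / 2).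
  apply (eventually_lt_asym f (const_fun c)).
  - apply mono1; [exact Hf | apply BM_const | rewrite const1; unfold c; lra].
  - apply mono2; [apply BM_const | exact Hf | rewrite const2; unfold c; lra].
Qed.

Theorem mainTheorem2 (L1 L2 : pfun -> R) :
  is_limit_on_BM L1 -> is_limit_on_BM L2 ->
  forall f, BM f -> L1 f = L2 f.
Proof.
  intros H1 H2 f Hf.
  pose proof (limit_on_BM_not_lt L1 L2 H1 H2 f Hf).
  pose proof (limit_on_BM_not_lt L2 L1 H2 H1 f Hf).
  lra.
Qed.
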